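(* Let $G$ be a graph, $B$ a hopping forcing set of $G$, and $\mathcal F$ a set of hopping forces of $B$ arising from a chronological list that colors all of $V(G)$ blue, and let $t=\operatorname{pt}_{\operatorname{H}}(G;\mathcal F)$. Then for every $i\in\{0,\ldots,t\}$, $$\mathcal F^{(t-i)}\subseteq \operatorname{Term}(\mathcal F)^{[i]},$$ where $\mathcal F^{(j)}$ is computed for the process starting from $B$ with forces $\mathcal F$, and $\operatorname{Term}(\mathcal F)^{[i]}$ is computed for the process starting from $\operatorname{Term}(\mathcal F)$ with forces $\operatorname{Rev}(\mathcal F)$.
   Context: All graphs are finite, simple and undirected. Hopping color change rule: a blue vertex $v$ may force a white vertex $w$ to become blue if $v$ has not previously performed a force and every neighbor of $v$ is blue. For an initial blue set $B$, a chronological list of forces of $B$ is a sequence of such forces applied one at a time until no further force is possible; its underlying unordered set is a set of forces of $B$. $B$ is a hopping forcing set if some chronological list of forces of $B$ turns all vertices blue. For an initial set $S$ and a set of forces $\mathcal E$ of $S$, let $\mathcal E^{(0)}=S$ and for $j\geq1$ let $\mathcal E^{(j)}$ be the set of vertices $w\notin U_{j-1}:=\bigcup_{i=0}^{j-1}\mathcal E^{(i)}$ for which there is $(v\to w)\in\mathcal E$ with $v\in U_{j-1}$ and all neighbors of $v$ in $U_{j-1}$; write $S^{[i]}=\bigcup_{j=0}^{i}\mathcal E^{(j)}$. $\operatorname{pt}_{\operatorname{H}}(G;\mathcal E)$ is the least $j$ with $S^{[j]}=V(G)$. $\operatorname{Rev}(\mathcal F)=\{w\to v:(v\to w)\in\mathcal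 F\}$ and $\operatorname{Term}(\mathcal F)$ is the set of vertices of $G$ performing no force in $\mathcal F$; $\operatorname{Rev}(\mathcal F)$ is a valid set of hopping forces of $\operatorname{Term}(\mathcal F)$. *)

From mathcomp Require Import all_boot.
Set Implicit Arguments. Unset Strict Implicit. Unset Printing Implicit Defensive.

(* Graph: vertex type T : finType, adjacency e : rel T (symmetric, irreflexive).
   A force v -> w is the pair (v, w) : T * T. *)
Section Hopping.
Variable T : finType.
Variable e : rel T.

Definition nbhd (v : T) : {set T} := [set u | e v u].

(* Hopping color change rule: with current blue set Bl and set [used] of
   vertices that have already forced, v may force w. *)
Definition can_force (Bl used : {set T}) (v w : T) : bool :=
  [&& v \in Bl, v \notin used, nbhd v \subset Bl & w \notin Bl].

Fixpoint chron_ok (Bl used : {set T}) (L : seq (T * T)) : bool :=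
  if L is p :: L' then
    can_force Bl used p.1 p.2 && chron_ok (p.2 |: Bl) (p.1 |: used) L'
  else true.

Definition final_blue (B : {set T}) (L : seq (T * T)) : {set T} :=
  B :|: [set x | x \in map snd L].

Definition forcers (L : seq (T * T)) : {set T} := [set x | x \in map fst L].

Definition chron_list (B : {set T}) (L : seq (T * T)) : bool :=
  chron_ok B set0 L &&
  [forall v, forall w, ~~ can_force (final_blue B L) (forcers L) v w].

Definition forces_of_list (L : seq (T * T)) : {set T * T} := [set p in L].

Definition hopping_forcing_set (B : {set T}) : Prop :=
  exists L, chron_list B L /\ final_blue B L = [set: T].

(* Time-step process: U_j = \bigcup_{i<=j} E^(i), i.e. S^[j]. *)
Definition hstep (E : {set T * T}) (U : {set T}) : {set T} :=
  U :|: [set w | (w \notin U) &&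
                 [exists v, [&& (v, w) \in E, v \in U & nbhd v \subset U]]].

Fixpoint upto (S : {set T}) (E : {set T * T}) (j : nat) : {set T} :=
  if j is j'.+1 then hstep E (upto S E j') else S.

Definition layer (S : {set T}) (E : {set T * T}) (j : nat) : {set T} :=
  if j is j'.+1 then upto S E j :\: upto S E j' else S.

Definition is_pt (S : {set T}) (E : {set T * T}) (t : nat) : Prop :=
  upto S E t = [set: T] /\ forall j, j < t -> upto S E j <> [set: T].

Definition Rev (F : {set T * T}) : {set T * T} := [set (p.2, p.1) | p in F].

Definition Term (F : {set T * T}) : {set T} :=
  [set v | [forall p in F, p.1 != v]].

End Hopping.

From mathcomp Require Import all_boot.
From mathcomp Require Import zify.

Set Implicit Arguments.
Unset Strict Implicit.
Unset Printing Implicit Defensive.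

(* Let a(v) be the step at which v turns blue in the forward process.  If v
   forces y, then v and all its neighbours are blue before step a(y), and y
   has a unique forcer.  Hence a vertex v all of whose forces (v, y) satisfy
   a(y) > k is blue by step t - k of the reversed process: either v is
   terminal, or the reversed force y -> v fires at step t - a(y) + 1, because
   y and its neighbours satisfy the same condition for k := a(y) (here the
   symmetry of the graph is used).  Vertices of the forward layer t - i meet
   the condition for k := t - i. *)

Section Process.
Variables (T : finType) (e : rel T).

Section Steps.
Variables (S : {set T}) (E : {set T * T}).

Lemma upto_mono j k : j <= k -> upto e S E j \subset upto e S E k.
Proof.
move/subnK<-; elim: (k - j) => [|n IH] //=.
by apply: subset_trans IH _; apply: subsetUl.
Qed.

Lemma upto_force j v w :
  (v, w) \in E -> v \in upto e S E j -> nbhd e v \subset upto e S E j ->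
  w \in upto e S E j.+1.
Proof.
move=> vwE vU vN; rewrite /= /hstep !inE; case: (w \in upto e S E j) => //=.
by apply/existsP; exists v; rewrite vwE vU vN.
Qed.

Lemma upto_new_forced j w :
  w \in upto e S E j.+1 -> w \notin upto e S E j ->
  exists v, [/\ (v, w) \in E, v \in upto e S E j & nbhd e v \subset upto e S E j].
Proof.
rewrite /= /hstep !inE => /orP[->//|/andP[_ /existsP[v /and3P[vwE vU vN]]]] _.
by exists v.
Qed.

Variable t : nat.
Hypothesis covered : upto e S E t = [set: T].

Lemma upto_covered_ex v : exists j, v \in upto e S E j.
Proof. by exists t; rewrite covered inE. Qed.

Definition arrival (v : T) : nat := ex_minn (upto_covered_ex v).

Lemma arrivalP v : v \in upto e S E (arrival v).
Proof. by rewrite /arrival; case: ex_minnP. Qed.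

Lemma arrival_min v j : v \in upto e S E j -> arrival v <= j.
Proof. by rewrite /arrival; case: ex_minnP => m _; apply. Qed.

Lemma arrival_le v : arrival v <= t.
Proof. by apply: arrival_min; rewrite covered inE. Qed.

Lemma layer_arrival j v : v \in layer e S E j -> arrival v = j.
Proof.
case: j => [vS|j]; first by apply/eqP; rewrite -leqn0 arrival_min.
rewrite inE => /andP[vj vj1]; apply/eqP; rewrite eqn_leq arrival_min //=.
rewrite ltnNge; apply: contra vj => le_a.
by apply: subsetP (upto_mono le_a) _ (arrivalP v).
Qed.

Hypothesis target_notin : forall x w, (x, w) \in E -> w \notin S.
Hypothesis forcer_unique : forall x y w, (x, w) \in E -> (y, w) \in E -> x = y.

Lemma forcer_blue_before x w : (x, w) \in E ->
  0 < arrival w /\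
  x |: nbhd e x \subset upto e S E (arrival w).-1.
Proof.
move=> xwE; case Ew: (arrival w) => [|s].
  by have := arrivalP w; rewrite Ew /= => wS; have := target_notin xwE; rewrite wS.
have wn : w \notin upto e S E s.
  by apply/negP => /arrival_min; rewrite Ew ltnn.
have := arrivalP w; rewrite Ew => /upto_new_forced/(_ wn)[v [vwE vU vN]].
by rewrite -(forcer_unique vwE xwE) subUset sub1set vU vN.
Qed.

Lemma arrival_lt_force x w u : (x, w) \in E -> u \in x |: nbhd e x ->
  arrival u < arrival w.
Proof.
move=> /forcer_blue_before[pos_w /subsetP sub] /sub /arrival_min.
by rewrite -ltnS prednK.
Qed.

End Steps.

Lemma Term_forcer (F : {set T * T}) v : v \notin Term F -> exists y, (v, y) \in F.
Proof.
rewrite inE negb_forall => /existsP[[x y]]; rewrite negb_imply negbK.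
by case/andP=> xyF /eqP /= <-; exists y.
Qed.

Lemma mem_Rev (F : {set T * T}) v w : ((w, v) \in Rev F) = ((v, w) \in F).
Proof.
apply/imsetP/idP => [[[x y] xyF [-> ->]] //|vwF].
by exists (v, w).
Qed.

Section Reversal.
Hypothesis e_sym : symmetric e.
Variables (S : {set T}) (F : {set T * T}) (t : nat).
Hypothesis covered : upto e S F t = [set: T].
Hypothesis target_notin : forall x w, (x, w) \in F -> w \notin S.
Hypothesis forcer_unique : forall x y w, (x, w) \in F -> (y, w) \in F -> x = y.

Local Notation a := (arrival covered).
Local Notation R := (upto e (Term F) (Rev F)).

Lemma rev_upto_late_forcer k v :
  (forall y, (v, y) \in F -> k < a y) -> v \in R (t - k).
Proof.
move: (ltnSn (t - k)); move: {2}(t - k).+1 => n.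
elim: n k v => [//|n IH] k v lt_tk late.
have [vT|/Term_forcer[y vyF]] := boolP (v \in Term F).
  exact: subsetP (upto_mono _ _ (leq0n _)) _ vT.
have [lt_ky le_yt] : k < a y /\ a y <= t by split; [apply: late | apply: arrival_le].
have late_y u : u \in y |: nbhd e y -> u \in R (t - a y).
  move=> yu; apply: IH => [|z uzF]; first lia.
  by apply: arrival_lt_force uzF _; move: yu; rewrite !inE eq_sym e_sym.
have yN : nbhd e y \subset R (t - a y).
  by apply/subsetP => u yu; apply: late_y; rewrite inE yu orbT.
have vR : v \in R (t - a y).+1.
  by apply: upto_force (late_y y (setU11 _ _)) yN; rewrite mem_Rev.
by apply: subsetP (upto_mono _ _ _) _ vR; lia.
Qed.

End Reversal.

Lemma chron_ok_target_notin Bl used L p :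
  chron_ok e Bl used L -> p \in L -> p.2 \notin Bl.
Proof.
elim: L Bl used => [//|q L IH] Bl used /= /andP[/and4P[_ _ _ q2] okL].
rewrite inE => /orP[/eqP->//|pL].
by apply: contra (IH _ _ okL pL) => p2; rewrite inE p2 orbT.
Qed.

Lemma chron_ok_target_inj Bl used L p q :
  chron_ok e Bl used L -> p \in L -> q \in L -> p.2 = q.2 -> p = q.
Proof.
elim: L Bl used => [//|r L IH] Bl used /= /andP[_ okL].
have new s : s \in L -> s.2 != r.2.
  by move=> sL; apply: contraNneq (chron_ok_target_notin okL sL) => ->; rewrite setU11.
rewrite !inE => /orP[/eqP->|pL] /orP[/eqP->|qL] // eq2.
- by move: (new q qL); rewrite eq2 eqxx.
- by move: (new p pL); rewrite eq2 eqxx.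
- exact: IH okL pL qL eq2.
Qed.

End Process.

Theorem lemma4p6 (T : finType) (e : rel T)
  (e_sym : symmetric e) (e_irr : irreflexive e)
  (B : {set T}) (L : seq (T * T))
  (HB : hopping_forcing_set e B)
  (HL : chron_list e B L) (Hall : final_blue B L = [set: T])
  (t : nat) (Ht : is_pt e B (forces_of_list L) t) :
  forall i, i <= t ->
    layer e B (forces_of_list L) (t - i)
      \subset upto e (Term (forces_of_list L)) (Rev (forces_of_list L)) i.
Proof.
have okL : chron_ok e B set0 L by case/andP: HL.
have target_notin x w : (x, w) \in forces_of_list L -> w \notin B.
  by rewrite inE => /(chron_ok_target_notin okL).
have forcer_unique x y w :
    (x, w) \in forces_of_list L -> (y, w) \in forces_of_list L -> x = y.
  by rewrite !inE => xwL ywL; case: (chron_ok_target_inj okL xwL ywL erefl).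
move=> i le_it; apply/subsetP => x xl.
rewrite -[i](subKn le_it).
apply: (rev_upto_late_forcer e_sym (covered := Ht.1)) => // y xyF.
rewrite -(layer_arrival Ht.1 xl).
exact: arrival_lt_force xyF (setU11 _ _).
Qed.
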